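(* Let $G$ be a graph of order $n$ having $q\ge 1$ vertices $v_1,\dots,v_q$, each of degree larger than two, such that the distance between any two of them is at least three, and such that the set of vertices not adjacent to (nor equal to) any $v_i$, $i\in\{1,\dots,q\}$, i.e. $V(G)\setminus\bigcup_{i=1}^q N_G[v_i]$, is an independent set. Then $$\gamma_{qtR}(G)\le n+3q-\sum_{i=1}^q (d_G(v_i)+1).$$
   Context: All graphs are finite, simple and undirected; $N_G[v]$ is the closed neighborhood and $d_G(v)$ the degree. For $f:V(G)\to\{0,1,2\}$ write $V_i=\{v:f(v)=i\}$; weight $\omega(f)=|V_1|+2|V_2|$. A quasi-total Roman dominating function (QTRDF) is an $f$ such that every vertex labeled $0$ is adjacent to a vertex labeled $2$, and every vertex isolated in the subgraph induced by $V_1\cup V_2$ has label $1$; $\gamma_{qtR}(G)$ is the minimum weight of a QTRDF. *)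

(* finite simple graphs as symmetric irreflexive relations on a finType. *)
From mathcomp Require Import all_boot.
Set Implicit Arguments. Unset Strict Implicit. Unset Printing Implicit Defensive.

Section Graph.
Variables (T : finType) (e : rel T).

Definition nbh (v : T) : {set T} := [set u | e v u].
Definition cnbh (v : T) : {set T} := v |: nbh v.
Definition deg (v : T) : nat := #|nbh v|.

Definition dist_ge3 (u v : T) : bool :=
  [&& u != v, ~~ e u v & [forall w, ~~ (e u w && e w v)]].

Definition independent (A : {set T}) : bool :=
  [forall x in A, forall y in A, ~~ e x y].

Definition weight (f : {ffun T -> 'I_3}) : nat := \sum_(v : T) (f v : nat).

Definition is_qtrdf (f : {ffun T -> 'I_3}) : bool :=
  [forall v, ((f v : nat) == 0) ==> [exists u, e v u && ((f u : nat) == 2)]] &&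
  (* v in V1 u V2 isolated in the subgraph induced by V1 u V2 must have label 1 *)
  [forall v, (((f v : nat) != 0) && [forall u, e v u ==> ((f u : nat) == 0)])
               ==> ((f v : nat) == 1)].

(* minimum weight of a QTRDF; 2|V| is an upper bound since the constant-1
   labelling is a QTRDF of weight |V| *)
Definition gamma_qtR : nat :=
  \big[minn/(#|T|).*2]_(f : {ffun T -> 'I_3} | is_qtrdf f) weight f.

End Graph.

(* Label every v in S with 2, one chosen neighbour of each v with 1, the rest
   of the closed neighbourhoods N[v] with 0 and every other vertex with 1.
   Every 0 then has a neighbour labelled 2 and every 2 a neighbour labelled 1,
   so this is a QTRDF.  Distance at least three makes the N[v] pairwise
   disjoint, so they cover sum_v (d(v) + 1) vertices, and the weight is
   n - sum_v (d(v) + 1) + 2q + (at most q chosen neighbours). *)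
From mathcomp Require Import all_boot all_order zify.
Import Order.TTheory.

Set Implicit Arguments.
Unset Strict Implicit.
Unset Printing Implicit Defensive.

Lemma gamma_qtR_le (T : finType) (e : rel T) (f : {ffun T -> 'I_3}) :
  is_qtrdf e f -> gamma_qtR e <= weight f.
Proof. exact: (@bigmin_le_cond _ nat). Qed.

Lemma sum_mem_card (T : finType) (A : {set T}) : \sum_x (x \in A : nat) = #|A|.
Proof. by rewrite -sum1_card [RHS]big_mkcond; apply: eq_bigr => x _; case: (x \in A). Qed.

Lemma card_bigcup_disjoint (I T : finType) (P : {set I}) (F : I -> {set T}) :
  {in P &, forall i j, i != j -> [disjoint F i & F j]} ->
  #|\bigcup_(i in P) F i| = \sum_(i in P) #|F i|.
Proof.
move=> disjF; rewrite -sum_mem_card.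
under [RHS]eq_bigr do rewrite -sum_mem_card.
rewrite exchange_big; apply: eq_bigr => x _.
case: bigcupP => [[i0 Pi0 xFi0] | notx].
  rewrite (bigD1 i0) //= xFi0 big1 // => i /andP [Pi ne_i_i0].
  by have /disjointFl -> := disjF i i0 Pi Pi0 ne_i_i0.
by rewrite big1 // => i Pi; case: (boolP (x \in F i)) => // xFi; case: notx; exists i.
Qed.

Section StarLabelling.
Variables (T : finType) (e : rel T).
Hypotheses (e_sym : symmetric e) (e_irr : irreflexive e).

Lemma card_cnbh v : #|cnbh e v| = (deg e v).+1.
Proof. by rewrite cardsU1 inE e_irr. Qed.

Lemma dist_ge3_disjoint_cnbh u v : dist_ge3 e u v -> [disjoint cnbh e u & cnbh e v].
Proof.
case/and3P => ne_uv not_euv /forallP no_common.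
apply/pred0P => x /=; rewrite !inE.
apply/negP => /andP [/orP [/eqP xu | eux] /orP [/eqP xv | evx]].
- by move: ne_uv; rewrite -xu -xv eqxx.
- by move: not_euv; rewrite -xu e_sym evx.
- by move: not_euv; rewrite -xv eux.
- by move: (no_common x); rewrite eux e_sym evx.
Qed.

Definition cnbh_cover (S : {set T}) : {set T} := \bigcup_(v in S) cnbh e v.

Lemma exists_neighbour_choice (S : {set T}) :
  (forall v, v \in S -> 0 < deg e v) ->
  exists U : {set T}, [/\ U \subset cnbh_cover S, #|U| <= #|S|
                        & forall v, v \in S -> exists2 u, e v u & u \in U].
Proof.
move=> Sdeg; pose pk v := odflt v [pick u in nbh e v].
have e_pk v : v \in S -> e v (pk v).
  move=> vS; rewrite /pk; case: pickP => [u | no_nbh] /=; first by rewrite inE.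
  by move: (Sdeg v vS); rewrite /deg (eq_card0 no_nbh).
exists [set pk v | v in S]; split; first 1 last.
- exact: leq_imset_card.
- by move=> v vS; exists (pk v); [exact: e_pk | exact: imset_f].
apply/subsetP => _ /imsetP [v vS ->]; apply/bigcupP; exists v => //.
by rewrite !inE e_pk ?orbT.
Qed.

Definition star_label (S U : {set T}) (x : T) : nat :=
  if x \in S then 2 else if x \in U then 1 else if x \in cnbh_cover S then 0 else 1.

Definition star_labelling (S U : {set T}) : {ffun T -> 'I_3} :=
  [ffun x => inord (star_label S U x)].

Lemma star_labellingE S U x : (star_labelling S U x : nat) = star_label S U x.
Proof.
rewrite ffunE inordK // /star_label.
by case: (x \in S); case: (x \in U); case: (x \in cnbh_cover S).
Qed.

Lemma star_labelling_qtrdf (S U : {set T}) :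
  (forall v, v \in S -> exists2 u, e v u & u \in U) ->
  is_qtrdf e (star_labelling S U).
Proof.
move=> SU; apply/andP; split; apply/forallP => x; rewrite star_labellingE /star_label.
  case: ifP => // xS; case: ifP => // xU; case: ifP => // /bigcupP [v vS].
  rewrite !inE => /orP [/eqP xv | evx]; first by rewrite xv vS in xS.
  apply/implyP => _; apply/existsP; exists v.
  by rewrite e_sym evx star_labellingE /star_label vS.
case: ifP => xS; last by case: (x \in U); case: (x \in cnbh_cover S); rewrite /= ?implybT.
apply/implyP => /andP [_ /forallP all0]; have [u exu uU] := SU x xS.
by move: (all0 u); rewrite exu star_labellingE /star_label uU; case: ifP.
Qed.

Lemma weight_star_labelling (S U : {set T}) :
  U \subset cnbh_cover S ->
  weight (star_labelling S U) + #|cnbh_cover S| = #|T| + 2 * #|S| + #|U :\: S|.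
Proof.
move=> /subsetP sUC.
have sSC : S \subset cnbh_cover S.
  by apply/subsetP => v vS; apply/bigcupP; exists v; rewrite // setU11.
have pointwise x : (star_labelling S U x : nat) + (x \in cnbh_cover S)
                   = 1 + 2 * (x \in S) + (x \in U :\: S).
  rewrite star_labellingE /star_label inE.
  case: ifP => [xS | _]; first by rewrite (subsetP sSC).
  by case: ifP => [/sUC -> | _] //; case: ifP.
rewrite /weight -!sum_mem_card -sum1_card big_distrr -!big_split.
by apply: eq_bigr => x _; exact: pointwise.
Qed.

End StarLabelling.

Theorem mainTheorem5 (T : finType) (e : rel T)
  (e_sym : symmetric e) (e_irr : irreflexive e) (S : {set T}) :
  0 < #|S| ->
  (forall v, v \in S -> 2 < deg e v) ->
  (forall u v, u \in S -> v \in S -> u != v -> dist_ge3 e u v) ->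
  independent e [set x | [forall v in S, x \notin cnbh e v]] ->
  gamma_qtR e + \sum_(v in S) (deg e v).+1 <= #|T| + 3 * #|S|.
Proof.
move=> _ Sdeg Sdist _.
have Sdeg_pos v : v \in S -> 0 < deg e v by move/Sdeg/ltnW/ltnW.
have [U [sUC leUS SU]] := exists_neighbour_choice Sdeg_pos.
have disjS : {in S &, forall u v, u != v -> [disjoint cnbh e u & cnbh e v]}.
  by move=> u v uS vS /(Sdist u v uS vS); exact: dist_ge3_disjoint_cnbh.
have card_cover : #|cnbh_cover e S| = \sum_(v in S) (deg e v).+1.
  by rewrite /cnbh_cover card_bigcup_disjoint //; apply: eq_bigr => v _; exact: card_cnbh.
rewrite -card_cover.
apply: leq_trans (leq_add (gamma_qtR_le (star_labelling_qtrdf e_sym SU)) (leqnn _)) _.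
rewrite weight_star_labelling //.
have : #|U :\: S| <= #|S| := leq_trans (subset_leq_card (subsetDl U S)) leUS.
lia.
Qed.
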